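(* Let $D=(\mathcal V,\mathcal A)$, $F$, $B$ and $T=(V,A,L)$ with root $r$ be as in the context, let $\mathcal S=F^{-1}(1)\cup B^{-1}(\mathbb N^+)$, and let $Q(X,z)$ be the polynomial defined there. Then $Q(X,z)$ contains, in its sum-product expansion (with nonzero coefficient), a monomial of the form $z^{|\mathcal S|}\,b(X)$, where $b(X)$ is a multilinear monomial in exactly $\eta$ distinct variables from $X=\{x_w: w\in\mathcal V\}$, if and only if $T$ has an $\mathcal S$-embedding into $D$.
   Context: $D=(\mathcal V,\mathcal A)$ is a digraph with $F:\mathcal V\to\{0,1\}$, $B:\mathcal V\to\mathbb N$; $T=(V,A)$ is a directed tree (orientation of a tree) of order $\eta$ with $L:V\to\mathbb N$, rooted at a vertex $r$; for $u\ne r$, $p(u)$ is its parent. For $u\in V$ let $N^{in}(u)=\{v: (v,u)\in A,\ v\neq p(u)\}$ and $N^{out}(u)=\{v:(u,v)\in A,\ v\ne p(u)\}$ (so $N^{in}(u)\cup N^{out}(u)$ is the set of children of $u$). Let $\mathcal S=F^{-1}(1)\cup B^{-1}(\mathbb N^+)$. Variables: $x_w$ for $w\in\mathcal V$, and $z$. For $u\in V,w\in\mathcal V$ set $\zeta(u,w)=z$ if $w\in\mathcal S$ and $L(u)\le B(w)$; $\zeta(u,w)=1$ if $w\notin\mathcal S$ and $L(u)\le B(w)$; $\zeta(u,w)=0$ if $L(u)>B(w)$. Define $Q_{u,w}(X)$ bottom-up: if $u$ has no children, $Q_{u,w}=\zeta(u,w)x_w$; otherwise $Q_{u,w}=\zeta(u,w)\,x_w\cdot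 Q^+_{u,w}\cdot Q^-_{u,w}$, where $Q^+_{u,w}=\prod_{v\in N^{in}(u)}\sum_{(w',w)\in\mathcal A}Q_{v,w'}$ and $Q^-_{u,w}=\prod_{v\in N^{out}(u)}\sum_{(w,w')\in\mathcal A}Q_{v,w'}$ (an empty product being omitted, i.e. equal to $1$). Finally $Q(X,z)=\sum_{w\in\mathcal V}Q_{r,w}(X)$. $T$ has an $\mathcal S$-embedding into $D$ if there is an injective map $f:V\to\mathcal V$ such that (E1) $(u,v)\in A$ implies $(f(u),f(v))\in\mathcal A$; (E2) $\mathcal S\subseteq f(V)$; (E3) $L(v)\le B(f(v))$ for all $v\in V$. *)

From mathcomp Require Import all_boot.
Set Implicit Arguments. Unset Strict Implicit. Unset Printing Implicit Defensive.

(* A term of the sum-product expansion: the monomial  prod_w x_w^(e w) * z^k,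
   represented as (e, k). A polynomial with nonnegative integer coefficients
   is represented by its sum-product expansion, a multiset (seq) of such
   terms each with coefficient 1; the coefficient of a monomial is its
   multiplicity. *)
Definition term (Vd : finType) := ({ffun Vd -> nat} * nat)%type.

Definition tmul (Vd : finType) (a b : term Vd) : term Vd :=
  ([ffun w => a.1 w + b.1 w], a.2 + b.2).

Definition pmul (Vd : finType) (P Q : seq (term Vd)) : seq (term Vd) :=
  [seq tmul a b | a <- P, b <- Q].

Definition tone (Vd : finType) : term Vd := ([ffun _ => 0], 0).
Definition tz (Vd : finType) : term Vd := ([ffun _ => 0], 1).
Definition xvar (Vd : finType) (w : Vd) : term Vd := ([ffun w' => nat_of_bool (w' == w)], 0).

Definition coef (Vd : finType) (P : seq (term Vd)) (m : term Vd) : nat := count_mem m P.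

Definition inS (Vd : finType) (F : Vd -> bool) (B : Vd -> nat) (w : Vd) : bool :=
  F w || (0 < B w).
Definition Sset (Vd : finType) (F : Vd -> bool) (B : Vd -> nat) : {set Vd} :=
  [set w | inS F B w].

(* zeta(u,w) as an expansion: 0 -> [::], 1 -> [:: 1], z -> [:: z] *)
Definition zeta (Vd V : finType) (F : Vd -> bool) (B : Vd -> nat) (L : V -> nat)
    (u : V) (w : Vd) : seq (term Vd) :=
  if L u <= B w then (if inS F B w then [:: tz Vd] else [:: tone Vd]) else [::].

Definition Nin (V : finType) (A : rel V) (p : V -> V) (u : V) : seq V :=
  [seq v <- enum V | A v u && (v != p u)].
Definition Nout (V : finType) (A : rel V) (p : V -> V) (u : V) : seq V :=
  [seq v <- enum V | A u v && (v != p u)].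

(* Q_{u,w}, computed bottom-up with a fuel parameter n (fuel #|V| suffices,
   since every vertex has depth < #|V|). Empty products are 1. *)
Fixpoint Qf (Vd V : finType) (arcs : rel Vd) (F : Vd -> bool) (B : Vd -> nat)
    (A : rel V) (p : V -> V) (L : V -> nat) (n : nat) (u : V) (w : Vd)
    : seq (term Vd) :=
  match n with
  | 0 => [::]
  | n'.+1 =>
      pmul (pmul (zeta F B L u w) [:: xvar w])
        (pmul
          (foldr (fun v acc =>
             pmul (flatten [seq Qf arcs F B A p L n' v w' | w' <- enum Vd & arcs w' w]) acc)
             [:: tone Vd] (Nin A p u))
          (foldr (fun v acc =>
             pmul (flatten [seq Qf arcs F B A p L n' v w' | w' <- enum Vd & arcs w w']) acc)
             [:: tone Vd] (Nout A p u)))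
  end.

Definition Qpoly (Vd V : finType) (arcs : rel Vd) (F : Vd -> bool) (B : Vd -> nat)
    (A : rel V) (p : V -> V) (L : V -> nat) (r : V) : seq (term Vd) :=
  flatten [seq Qf arcs F B A p L #|V| r w | w <- enum Vd].

(* T = (V,A) is an orientation of a tree, rooted at r, with parent function p
   (convention p r = r): the edges of the underlying tree are exactly the
   pairs {u, p u} (u <> r), each oriented in exactly one direction. *)
Definition rooted_oriented_tree (V : finType) (A : rel V) (r : V) (p : V -> V) : Prop :=
  [/\ p r = r,
      (forall u, exists k, iter k p u = r),
      (forall u, u != r -> A u (p u) (+) A (p u) u)
    & (forall u v, A u v -> (u != r /\ v = p u) \/ (v != r /\ u = p v))].

Definition S_embedding (Vd V : finType) (arcs : rel Vd) (F : Vd -> bool) (B : Vd -> nat)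
    (A : rel V) (L : V -> nat) : Prop :=
  exists f : V -> Vd,
    [/\ injective f,
        (forall u v, A u v -> arcs (f u) (f v)),
        (forall w, inS F B w -> exists v, f v = w)
      & (forall v, L v <= B (f v))].

From mathcomp Require Import all_boot zify.
Set Implicit Arguments. Unset Strict Implicit. Unset Printing Implicit Defensive.

(* Unfolding the recursion, a term of the expansion of Q_{u,w} is the same thing
   as a labelling g of the subtree of u with g u = w that maps arcs of T to arcs
   of D and respects L (call it admissible); the term is then the monomial of g,
   in which x_w counts the vertices labelled w and z those labelled in S.  At
   the root the subtree is all of T, so the term is multilinear with exactly
   eta variables iff g is injective, and then its z-degree is |g(V) ∩ S|, which
   equals |S| iff g(V) covers S. *)

Lemma disjointP (T : finType) (A B : {pred T}) :
  reflect (forall x, x \in A -> x \in B -> False) [disjoint A & B].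
Proof.
apply: (iffP pred0P) => [AB x xA xB | AB x /=]; first by have := AB x; rewrite /= xA xB.
by apply/negbTE/negP => /andP [/AB].
Qed.

Lemma flatten_filterP (T : finType) (X : eqType) (R : pred T) (Ps : T -> seq X) m :
  reflect (exists2 t, R t & m \in Ps t) (m \in flatten [seq Ps t | t <- enum T & R t]).
Proof.
apply: (iffP flatten_mapP) => [[t] | [t Rt mt]].
  by rewrite mem_filter => /andP [Rt _]; exists t.
by exists t; rewrite // mem_filter Rt mem_enum.
Qed.

Section Fibers.
Variables (T T' : finType) (g : T -> T').

Lemma injective_fibers : injective g <-> forall y, #|g @^-1: [set y]| <= 1.
Proof.
split=> [g_inj y | fib x x' gxx'].
  by apply/card_le1_eqP => x x'; rewrite !inE => /eqP <- /eqP /g_inj.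
by apply: (card_le1_eqP (fib (g x))); rewrite !inE ?gxx'.
Qed.

Lemma card_fibers_eq1 : injective g -> #|[set y | #|g @^-1: [set y]| == 1]| = #|T|.
Proof.
move=> g_inj; rewrite -cardsT -(card_imset _ g_inj); apply: eq_card => y; rewrite inE.
apply/eqP/imsetP => [fib1 | [x _ ->]].
  have : 0 < #|g @^-1: [set y]| by rewrite fib1.
  by case/card_gt0P => x; rewrite !inE => /eqP <-; exists x.
rewrite (_ : g @^-1: [set g x] = [set x]) ?cards1 //.
by apply/setP => x'; rewrite !inE; apply/eqP/eqP => [/g_inj|->].
Qed.

Lemma card_preimset_cover (S : {set T'}) :
  injective g -> #|g @^-1: S| = #|S| <-> {subset S <= codom g}.
Proof.
move=> g_inj; rewrite -(card_imset _ g_inj).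
have sub : g @: (g @^-1: S) \subset S by apply/subsetP => y /imsetP [x]; rewrite inE => Sx ->.
split=> [eqS y yS | cover].
  have AS := elimT (subset_cardP eqS) sub.
  by move: yS; rewrite -AS => /imsetP [x _ ->]; apply: codom_f.
apply/eqP; rewrite eqn_leq subset_leq_card //= subset_leq_card //.
by apply/subsetP => y yS; have /codomP [x yE] := cover y yS; rewrite yE imset_f // inE -yE.
Qed.

End Fibers.

Section Expansion.
Variable Vd : finType.
Implicit Types (P Q : seq (term Vd)) (a b m : term Vd).

Lemma coef_neq0 P m : (coef P m != 0) = (m \in P).
Proof. by rewrite /coef -lt0n -has_count has_pred1. Qed.

Lemma mem_pmul P Q a b : a \in P -> b \in Q -> tmul a b \in pmul P Q.
Proof. exact: allpairs_f. Qed.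

Lemma pmulP P Q m :
  reflect (exists a b, [/\ a \in P, b \in Q & m = tmul a b]) (m \in pmul P Q).
Proof.
apply: (iffP allpairsP) => [[[a b] /= [Pa Qb ->]] | [a [b [Pa Qb ->]]]].
  by exists a, b.
by exists (a, b).
Qed.

Definition pprod (I : Type) (Ps : I -> seq (term Vd)) (s : seq I) : seq (term Vd) :=
  foldr (fun i acc => pmul (Ps i) acc) [:: tone Vd] s.

End Expansion.

Section Monomial.
Variables (Vd V : finType) (F : Vd -> bool) (B : Vd -> nat).

Definition monomial (g : V -> Vd) (X : {set V}) : term Vd :=
  ([ffun w => \sum_(x in X) (g x == w)], \sum_(x in X) inS F B (g x)).

Definition zterm (w : Vd) : term Vd := if inS F B w then tz Vd else tone Vd.

Lemma monomial_set0 g : monomial g set0 = tone Vd.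
Proof. by congr pair; [apply/ffunP => w; rewrite !ffunE|]; rewrite big_set0. Qed.

Lemma monomial_set1 g u : monomial g [set u] = tmul (zterm (g u)) (xvar (g u)).
Proof.
rewrite /monomial /tmul big_set1 /=; congr pair; last by rewrite /zterm; case: (inS F B (g u)).
apply/ffunP => w; rewrite !ffunE big_set1 eq_sym.
by rewrite /zterm; case: (inS F B (g u)); rewrite ffunE.
Qed.

Lemma monomial_setU g (X Y : {set V}) :
  [disjoint X & Y] -> monomial g (X :|: Y) = tmul (monomial g X) (monomial g Y).
Proof.
move=> XY; congr pair; [apply/ffunP => w; rewrite !ffunE|]; rewrite -bigU //;
  by apply: eq_bigl => x; rewrite !inE.
Qed.

Lemma monomial_eq_in g h (X : {set V}) : {in X, g =1 h} -> monomial g X = monomial h X.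
Proof.
by move=> gh; congr pair; [apply/ffunP => w; rewrite !ffunE|]; apply: eq_bigr => x /gh ->.
Qed.

Lemma monomial_setT g :
  monomial g setT = ([ffun w => #|g @^-1: [set w]|], #|g @^-1: Sset F B|).
Proof.
congr pair; [apply/ffunP => w; rewrite !ffunE|]; rewrite -sum1_card [RHS]big_mkcond;
  by apply: eq_big => [x|x _]; rewrite !inE //; case: ifP => ->.
Qed.

Lemma pairwise_disjoint_cons (I : finType) (X : I -> {set V}) i s :
  uniq (i :: s) -> {in i :: s &, forall j k, j != k -> [disjoint X j & X k]} ->
  [disjoint X i & \bigcup_(j <- s) X j] /\ {in s &, forall j k, j != k -> [disjoint X j & X k]}.
Proof.
case/andP=> i_s _ dis; split=> [|j k js ks]; last by apply: dis; rewrite inE ?js ?ks orbT.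
rewrite bigcup_seq; apply: bigcup_disjoint => j js; apply: dis; rewrite ?inE ?eqxx ?js ?orbT //.
by apply: contraNneq i_s => ->.
Qed.

Lemma pprod_complete (I : finType) (Ps : I -> seq (term Vd)) (X : I -> {set V}) g s :
  uniq s -> {in s &, forall i j, i != j -> [disjoint X i & X j]} ->
  (forall i, i \in s -> monomial g (X i) \in Ps i) ->
  monomial g (\bigcup_(i <- s) X i) \in pprod Ps s.
Proof.
elim: s => [|i s IH] us dis gs /=; first by rewrite big_nil monomial_set0 mem_seq1.
have [dis_i dis_s] := pairwise_disjoint_cons us dis.
rewrite big_cons monomial_setU //; apply: mem_pmul; first exact: gs (mem_head _ _).
by apply: IH => [|//|j js]; [case/andP: us | apply: gs; rewrite inE js orbT].
Qed.

Lemma pprod_sound (I : finType) (Ps : I -> seq (term Vd)) (X : I -> {set V})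
    (P : I -> (V -> Vd) -> Prop) (g0 : V -> Vd) s :
  uniq s -> {in s &, forall i j, i != j -> [disjoint X i & X j]} ->
  (forall i g h, {in X i, g =1 h} -> P i g -> P i h) ->
  (forall i, i \in s -> forall m, m \in Ps i -> exists g, P i g /\ m = monomial g (X i)) ->
  forall m, m \in pprod Ps s ->
  exists g, (forall i, i \in s -> P i g) /\ m = monomial g (\bigcup_(i <- s) X i).
Proof.
move=> + + P_loc; elim: s => [|i s IH] us dis real m /=.
  by rewrite mem_seq1 => /eqP ->; exists g0; rewrite big_nil monomial_set0.
have [dis_i dis_s] := pairwise_disjoint_cons us dis.
case/pmulP=> a [b [Pa Pb ->]]; have [gi [Pgi ->]] := real i (mem_head _ _) a Pa.
have [|j js|gs [Pgs ->]] := IH _ dis_s _ b Pb; first by case/andP: us.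
  by apply: real; rewrite inE js orbT.
pose g x := if x \in X i then gi x else gs x.
have g_s : {in \bigcup_(j <- s) X j, gs =1 g} by move=> x xs; rewrite /g (disjointFl dis_i xs).
exists g; split=> [j|].
  rewrite inE => /predU1P [->|js]; first by apply: P_loc Pgi => x xi; rewrite /g xi.
  apply: P_loc (Pgs j js) => x xj; apply: g_s.
  by rewrite bigcup_seq; apply/bigcupP; exists j.
rewrite big_cons monomial_setU // (monomial_eq_in g_s); congr tmul.
by apply: monomial_eq_in => x xi; rewrite /g xi.
Qed.

End Monomial.

Section RootedTree.
Variables (V : finType) (A : rel V) (r : V) (p : V -> V).
Hypothesis tree : rooted_oriented_tree A r p.

Lemma parent_root : p r = r.
Proof. by case: tree. Qed.

Lemma iter_parent_root k : iter k p r = r.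
Proof. by elim: k => //= k ->; rewrite parent_root. Qed.

Lemma reaches_root u : exists k, iter k p u == r.
Proof. by case: tree => _ reach _ _; have [k uk] := reach u; exists k; apply/eqP. Qed.

Definition depth u := ex_minn (reaches_root u).

Lemma iter_depth u : iter (depth u) p u = r.
Proof. by rewrite /depth; case: ex_minnP => d /eqP. Qed.

Lemma depth_min u k : iter k p u = r -> depth u <= k.
Proof. by move=> /eqP uk; rewrite /depth; case: ex_minnP => d _; apply. Qed.

Lemma depth_eq0 u : (depth u == 0) = (u == r).
Proof.
apply/eqP/eqP => [d0|->]; first by rewrite -(iter_depth u) d0.
by apply/eqP; rewrite -leqn0 depth_min.
Qed.

Lemma depth_root : depth r = 0.
Proof. by apply/eqP; rewrite depth_eq0. Qed.

Lemma depth_parent u : depth (p u) = (depth u).-1.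
Proof.
have [->|ur] := eqVneq u r; first by rewrite parent_root depth_root.
have : depth u != 0 by rewrite depth_eq0.
case Ed: (depth u) => [|k] //= _; apply/eqP; rewrite eqn_leq.
rewrite depth_min /=; last by rewrite -iterSr -Ed iter_depth.
by rewrite -ltnS -Ed depth_min // iterSr iter_depth.
Qed.

Lemma depth_iter k u : depth (iter k p u) = depth u - k.
Proof. by elim: k => [|k IH]; rewrite ?subn0 //= depth_parent IH subnS. Qed.

Lemma depth_nonroot u : u != r -> depth u = (depth (p u)).+1.
Proof. by rewrite -depth_eq0 depth_parent; case: (depth u). Qed.

(* The iterates of [p] from [u] up to the root have pairwise distinct depths. *)
Lemma depth_lt_card u : depth u < #|V|.
Proof.
set d := depth u.
have uniq_path : uniq [seq iter i p u | i <- iota 0 d.+1].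
  rewrite map_inj_in_uniq ?iota_uniq // => i j; rewrite !mem_iota !ltnS => /= i_d j_d ij.
  by have := depth_iter i u; rewrite ij depth_iter -/d; lia.
by have := card_uniqP uniq_path; rewrite size_map size_iota => <-; apply: max_card.
Qed.

Lemma arc_parent u : u != r -> A u (p u) (+) A (p u) u.
Proof. by case: tree => _ _ xor _; apply: xor. Qed.

Lemma arcE u v : A u v -> (u != r /\ v = p u) \/ (v != r /\ u = p v).
Proof. by case: tree => _ _ _; apply. Qed.

Lemma parent_parent_neq u : u != r -> p (p u) != u.
Proof.
by move=> ur; apply/eqP => ppu; have := depth_nonroot ur; rewrite -{1}ppu depth_parent; lia.
Qed.

Lemma Nin_parent u v : v \in Nin A p u -> [/\ p v = u, v != r & A v u].
Proof.
rewrite mem_filter => /andP [/andP [vu vpu] _].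
by case: (arcE vu) => [[vr <-] | [_ vE]]; [split | rewrite vE eqxx in vpu].
Qed.

Lemma Nout_parent u v : v \in Nout A p u -> [/\ p v = u, v != r & A u v].
Proof.
rewrite mem_filter => /andP [/andP [uv vpu] _].
by case: (arcE uv) => [[_ vE] | [vr <-]]; [rewrite vE eqxx in vpu | split].
Qed.

Lemma uniq_Nin u : uniq (Nin A p u).
Proof. by rewrite filter_uniq // enum_uniq. Qed.

Lemma uniq_Nout u : uniq (Nout A p u).
Proof. by rewrite filter_uniq // enum_uniq. Qed.

Definition children u := Nin A p u ++ Nout A p u.

Lemma Nin_children u : {subset Nin A p u <= children u}.
Proof. by move=> v vin; rewrite mem_cat vin. Qed.

Lemma Nout_children u : {subset Nout A p u <= children u}.
Proof. by move=> v vout; rewrite mem_cat vout orbT. Qed.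

Lemma children_parent u v : v \in children u -> p v = u /\ v != r.
Proof. by rewrite mem_cat => /orP [/Nin_parent|/Nout_parent] []. Qed.

Lemma mem_children v : v != r -> v \in children (p v).
Proof.
move=> vr; rewrite mem_cat !mem_filter -enumT mem_enum eq_sym (parent_parent_neq vr) !andbT.
by move: (arc_parent vr); case: (A v (p v)).
Qed.

(* The only possible ancestor of x at the depth of u is its iterate at the depth
   difference. *)
Definition subtree u : {set V} := [set x | iter (depth x - depth u) p x == u].

Lemma subtreeP u x : reflect (exists k, iter k p x = u) (x \in subtree u).
Proof.
rewrite inE; apply: (iffP eqP) => [<-|[k xu]]; first by exists (depth x - depth u).
have du : depth u = depth x - k by rewrite -xu depth_iter.
have [kx|xk] := leqP k (depth x); first by rewrite du subKn.
have ur : u = r by rewrite -xu -(subnK (ltnW xk)) iterD iter_depth iter_parent_root.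
by rewrite ur depth_root subn0 iter_depth.
Qed.

Lemma subtree_refl u : u \in subtree u.
Proof. by apply/subtreeP; exists 0. Qed.

Lemma subtree_root : subtree r = setT.
Proof.
by apply/setP => x; rewrite in_setT; apply/subtreeP; exists (depth x); apply: iter_depth.
Qed.

Lemma subtree_parent v x : x \in subtree v -> x \in subtree (p v).
Proof. by case/subtreeP => k <-; apply/subtreeP; exists k.+1. Qed.

Lemma subtree_step v x : x \in subtree v -> x != v -> p x \in subtree v.
Proof.
case/subtreeP => [[|k] <-]; first by rewrite /= eqxx.
by move=> _; apply/subtreeP; exists k; rewrite -iterSr.
Qed.

Lemma parent_notin_subtree v : v != r -> p v \notin subtree v.
Proof.
move=> vr; apply/negP => /subtreeP [k]; move/(congr1 depth).
rewrite depth_iter depth_parent; move: vr; rewrite -depth_eq0; lia.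
Qed.

Lemma subtree_children u x :
  x \in subtree u -> x != u -> exists2 v, v \in children u & x \in subtree v.
Proof.
rewrite inE; have := leq_subr (depth u) (depth x).
case: (depth x - depth u) => [|k] k_x /eqP xu; first by move: xu => /= ->; rewrite eqxx.
move=> _; exists (iter k p x); last by apply/subtreeP; exists k.
by rewrite -xu iterS; apply: mem_children; rewrite -depth_eq0 depth_iter; lia.
Qed.

Lemma subtree_siblings u v v' x : v \in children u -> v' \in children u ->
  x \in subtree v -> x \in subtree v' -> v = v'.
Proof.
move=> /children_parent [pv vr] /children_parent [pv' vr'].
have dd : depth v = depth v' by rewrite (depth_nonroot vr) (depth_nonroot vr') pv pv'.
by rewrite !inE dd => /eqP -> /eqP.
Qed.

Lemma children_disjoint u (s : seq V) : {subset s <= children u} ->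
  {in s &, forall v v', v != v' -> [disjoint subtree v & subtree v']}.
Proof.
move=> su v v' /su cv /su cv' vv'; apply/disjointP => x xv xv'.
by rewrite (subtree_siblings cv cv' xv xv') eqxx in vv'.
Qed.

Lemma subtree_parent_arc u c : c \in subtree u -> p c \in subtree u -> c != r ->
  exists2 v, v \in children u &
    (c = v /\ p c = u) \/ (c \in subtree v /\ p c \in subtree v).
Proof.
move=> cu pcu cr; have cnu : c != u.
  by apply: contraNneq (parent_notin_subtree cr) => cE; rewrite {2}cE.
have [v cv c_v] := subtree_children cu cnu; exists v => //.
have [cE|cnv] := eqVneq c v; last by right; split; last apply: subtree_step.
by left; split=> //; case: (children_parent cv); rewrite cE.
Qed.

Definition subtrees (s : seq V) : {set V} := \bigcup_(v <- s) subtree v.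

Lemma subtreesP s x : reflect (exists2 v, v \in s & x \in subtree v) (x \in subtrees s).
Proof. by rewrite /subtrees bigcup_seq; apply: bigcupP. Qed.

Lemma root_notin_subtrees u : u \notin subtrees (children u).
Proof.
apply/subtreesP => -[v /children_parent [pv vr] uv].
by move: (parent_notin_subtree vr); rewrite pv uv.
Qed.

Lemma subtree_decomp u :
  subtree u = [set u] :|: (subtrees (Nin A p u) :|: subtrees (Nout A p u)).
Proof.
rewrite -big_cat -/(subtrees _); apply/setP => x; rewrite in_setU1 -/(children u).
have [->|xu] /= := eqVneq x u; first exact: subtree_refl.
apply/idP/subtreesP => [xs | [v /children_parent [<- _] /subtree_parent] //].
exact: subtree_children xs xu.
Qed.

Lemma disjoint_root_subtrees u :
  [disjoint [set u] & subtrees (Nin A p u) :|: subtrees (Nout A p u)].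
Proof.
by rewrite /subtrees -big_cat disjoints_subset sub1set in_setC root_notin_subtrees.
Qed.

Lemma disjoint_Nin_Nout u : [disjoint subtrees (Nin A p u) & subtrees (Nout A p u)].
Proof.
apply/disjointP => x /subtreesP [v vin xv] /subtreesP [v' vout xv'].
have vv' := subtree_siblings (Nin_children vin) (Nout_children vout) xv xv'.
move: vout; rewrite -vv'.
case/Nin_parent: vin => pv vr Avu; case/Nout_parent => _ _ Auv.
by move: (arc_parent vr); rewrite pv Avu Auv.
Qed.

Variables (Vd : finType) (arcs : rel Vd) (F : Vd -> bool) (B : Vd -> nat) (L : V -> nat).
Local Notation Q := (Qf arcs F B A p L).

Lemma QfS n u w : Q n.+1 u w =
  pmul (pmul (zeta F B L u w) [:: xvar w])
    (pmul (pprod (fun v => flatten [seq Q n v w' | w' <- enum Vd & arcs w' w]) (Nin A p u))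
          (pprod (fun v => flatten [seq Q n v w' | w' <- enum Vd & arcs w w']) (Nout A p u))).
Proof. by []. Qed.

Lemma mem_zeta u w m : (m \in zeta F B L u w) = (L u <= B w) && (m == zterm F B w).
Proof. by rewrite /zeta /zterm; case: (L u <= B w); case: (inS F B w); rewrite ?inE. Qed.

Lemma monomial_subtree g u : monomial F B g (subtree u) =
  tmul (tmul (zterm F B (g u)) (xvar (g u)))
       (tmul (monomial F B g (subtrees (Nin A p u))) (monomial F B g (subtrees (Nout A p u)))).
Proof.
by rewrite subtree_decomp !monomial_setU ?disjoint_root_subtrees ?disjoint_Nin_Nout ?monomial_set1.
Qed.

Definition admissible_on (X : {set V}) (g : V -> Vd) :=
  (forall x, x \in X -> L x <= B (g x)) /\
  (forall a b, a \in X -> b \in X -> A a b -> arcs (g a) (g b)).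

Lemma admissible_on_eq_in (X : {set V}) g h :
  {in X, g =1 h} -> admissible_on X g -> admissible_on X h.
Proof.
move=> gh [Lg homg]; split=> [x xX | a b aX bX]; first by rewrite -gh // Lg.
by rewrite -!gh //; apply: homg.
Qed.

Lemma admissible_subtree g u : L u <= B (g u) ->
  (forall v, v \in children u -> [/\ admissible_on (subtree v) g,
     A v u -> arcs (g v) (g u) & A u v -> arcs (g u) (g v)]) ->
  admissible_on (subtree u) g.
Proof.
move=> Lu ch; split=> [x xu | a b au bu Aab].
  have [->//|xnu] := eqVneq x u.
  by have [v /ch [[Lv _] _ _] xv] := subtree_children xu xnu; apply: Lv.
have parent_arc c : c \in subtree u -> p c \in subtree u -> c != r ->
    (A c (p c) -> arcs (g c) (g (p c))) /\ (A (p c) c -> arcs (g (p c)) (g c)).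
  move=> cu pcu cr; have [v /ch [[_ homv] Avu Auv]] := subtree_parent_arc cu pcu cr.
  by case=> [[-> ->] | [cv pcv]]; split=> // Ac; apply: homv.
case: (arcE Aab) => [[ar bE] | [br aE]]; first by subst b; exact: (parent_arc a au bu ar).1.
by subst a; exact: (parent_arc b bu au br).2.
Qed.

Lemma Qf_complete f : (forall a b, A a b -> arcs (f a) (f b)) -> (forall x, L x <= B (f x)) ->
  forall n u, #|V| <= depth u + n -> monomial F B f (subtree u) \in Q n u (f u).
Proof.
move=> homf Lf; elim=> [|n IH] u fuel; first by move: (depth_lt_card u) fuel; lia.
have children_ok s (R : pred Vd) : {subset s <= children u} -> uniq s ->
    (forall v, v \in s -> R (f v)) ->
    monomial F B f (subtrees s)
      \in pprod (fun v => flatten [seq Q n v w' | w' <- enum Vd & R w']) s.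
  move=> su us Rs; rewrite /subtrees; apply: pprod_complete us (children_disjoint su) _ => v vs.
  apply/flatten_filterP; exists (f v); first exact: Rs.
  have [pv vr] := children_parent (su v vs); apply: IH; rewrite (depth_nonroot vr) pv; lia.
rewrite QfS monomial_subtree; apply: mem_pmul; apply: mem_pmul.
- by rewrite mem_zeta Lf eqxx.
- by rewrite mem_seq1.
- by apply: children_ok (Nin_children (u := u)) (uniq_Nin u) _ => v /Nin_parent [<- _ /homf].
- by apply: children_ok (Nout_children (u := u)) (uniq_Nout u) _ => v /Nout_parent [<- _ /homf].
Qed.

Lemma Qf_sound n u w m : m \in Q n u w ->
  exists g, [/\ g u = w, admissible_on (subtree u) g & m = monomial F B g (subtree u)].
Proof.
elim: n u w m => [|n IH] u w m //.
have children_ok s (R : pred Vd) m' : {subset s <= children u} -> uniq s ->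
    m' \in pprod (fun v => flatten [seq Q n v w' | w' <- enum Vd & R w']) s ->
    exists g, (forall v, v \in s -> admissible_on (subtree v) g /\ R (g v)) /\
      m' = monomial F B g (subtrees s).
  move=> su us; rewrite /subtrees; move: m'.
  pose P v g := admissible_on (subtree v) g /\ R (g v).
  refine (pprod_sound (F := F) (B := B) (X := subtree) (P := P) (fun _ => w) us
    (children_disjoint su) _ _) => [v g h gh [adm Rg] | v _ m''].
    by split; [exact: admissible_on_eq_in adm | rewrite -gh ?subtree_refl].
  by case/flatten_filterP=> w' Rw' /IH [g [gv adm ->]]; exists g; rewrite /P gv.
rewrite QfS => /pmulP [a [b [/pmulP [z [x [zeta_z]]]]]].
rewrite mem_seq1 => /eqP -> -> /pmulP [mi [mo [min mout ->]]] ->.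
move: zeta_z; rewrite mem_zeta => /andP [Lu /eqP ->].
have [gi [gi_ok ->]] := children_ok _ _ _ (Nin_children (u := u)) (uniq_Nin u) min.
have [go [go_ok ->]] := children_ok _ _ _ (Nout_children (u := u)) (uniq_Nout u) mout.
pose g x := if x \in subtrees (Nin A p u) then gi x
            else if x \in subtrees (Nout A p u) then go x else w.
have gu : g u = w.
  move: (root_notin_subtrees u); rewrite /subtrees big_cat in_setU negb_or.
  by case/andP => /negbTE uin /negbTE uout; rewrite /g /subtrees uin uout.
have g_in : {in subtrees (Nin A p u), gi =1 g} by move=> y yin; rewrite /g yin.
have g_out : {in subtrees (Nout A p u), go =1 g}.
  by move=> y yout; rewrite /g yout (disjointFl (disjoint_Nin_Nout u) yout).
exists g; split=> //; last first.
  by rewrite monomial_subtree gu (monomial_eq_in F B g_in) (monomial_eq_in F B g_out).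
apply: admissible_subtree; first by rewrite gu.
move=> v; rewrite mem_cat => /orP [vin | vout].
  have [[adm arc] [pv vr Avu]] := (gi_ok v vin, Nin_parent vin).
  have g_v : {in subtree v, gi =1 g} by move=> y yv; apply: g_in; apply/subtreesP; exists v.
  split; [exact: admissible_on_eq_in adm | by rewrite gu -g_v ?subtree_refl |].
  by move=> Auv; move: (arc_parent vr); rewrite pv Avu Auv.
have [[adm arc] [pv vr Auv]] := (go_ok v vout, Nout_parent vout).
have g_v : {in subtree v, go =1 g} by move=> y yv; apply: g_out; apply/subtreesP; exists v.
split; [exact: admissible_on_eq_in adm | | by rewrite gu -g_v ?subtree_refl].
by move=> Avu; move: (arc_parent vr); rewrite pv Avu Auv.
Qed.

End RootedTree.

Theorem lemma4 (Vd V : finType) (arcs : rel Vd) (F : Vd -> bool) (B : Vd -> nat)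
    (A : rel V) (L : V -> nat) (r : V) (p : V -> V)
    (Hloop : irreflexive arcs)
    (Htree : rooted_oriented_tree A r p) :
  (exists m : term Vd,
      [/\ coef (Qpoly arcs F B A p L r) m != 0,
          m.2 = #|Sset F B|,
          (forall w, m.1 w <= 1)
        & #|[set w | m.1 w == 1]| = #|V| ])
  <-> S_embedding arcs F B A L.
Proof.
have subtree_rT := subtree_root Htree.
split=> [[m [+ m_z m_le1 _]] | [f [f_inj homf coverf Lf]]].
  rewrite coef_neq0 => /flatten_mapP [w _ /(Qf_sound Htree) [g [_ [Lg homg]]]].
  rewrite subtree_rT monomial_setT in Lg homg * => mE; rewrite mE /= in m_z m_le1.
  have g_inj : injective g by apply/injective_fibers => y; have := m_le1 y; rewrite ffunE.
  exists g; split=> // [a b Aab | y yS | x]; first exact: homg.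
    have /codomP [x ->] : y \in codom g.
      by move/(card_preimset_cover _ g_inj): m_z; apply; rewrite inE.
    by exists x.
  exact: Lg.
exists (monomial F B f setT); rewrite monomial_setT /=; split.
- rewrite coef_neq0 -monomial_setT -subtree_rT; apply/flatten_mapP; exists (f r).
    by rewrite mem_enum.
  by apply: Qf_complete; rewrite ?depth_root.
- apply/card_preimset_cover => // y; rewrite inE => /coverf [x <-]; exact: codom_f.
- by move=> y; rewrite ffunE; apply: (injective_fibers f).1.
- by rewrite -(card_fibers_eq1 f_inj); apply: eq_card => y; rewrite !inE ffunE.
Qed.
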